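(* Let $(F,+,\cdot)$ be a (left) near-field and let $\sigma,\rho$ be multiplicative automorphisms of $F$. Let $F^{\sigma,\rho}$ denote the abelian group $(F,+_\sigma)$ equipped with the action $\alpha\cdot_\rho\beta=\rho(\alpha)\beta$ of $(F,\cdot)$. Then $F^{\sigma,\rho}$ is a near-vector space over the scalar group $(F,\cdot,1,0,-1)$, its quasi-kernel is $Q(F^{\sigma,\rho})=F$, and for every $\gamma\in F\setminus\{0\}$ the addition $+_\gamma$ determined by $\gamma\in Q(F^{\sigma,\rho})$ satisfies $$+_\gamma=+_{\sigma(\gamma),\sigma\circ\rho}=+_{\varphi_{\sigma(\gamma)}\circ\sigma\circ\rho}=+_{\sigma\circ\varphi_\gamma\circ\rho}.$$ In particular $+_1=+_{\sigma\circ\rho}$.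
   Context: A (left) near-field is $(F,+,\cdot,0,1)$ where $(F,\cdot,1)$ is a monoid, $(F\setminus\{0\},\cdot)$ is a group, $(F,+,0)$ is an abelian group, and $\alpha(\beta+\gamma)=\alpha\beta+\alpha\gamma$. A multiplicative automorphism is a monoid automorphism of $(F,\cdot)$. For a multiplicative automorphism $\tau$, $\alpha+_\tau\beta=\tau^{-1}(\tau(\alpha)+\tau(\beta))$. For $\delta\in F\setminus\{0\}$, $\varphi_\delta(\alpha)=\delta^{-1}\alpha\delta$. For $\delta\in F\setminus\{0\}$, let $\alpha\oplus_\delta\beta=(\alpha\delta+\beta\delta)\delta^{-1}$ (the addition determined by $\delta$ in the near-field $F$ viewed as a near-vector space over itself), and $\alpha+_{\delta,\tau}\beta=\tau^{-1}(\tau(\alpha)\oplus_\delta\tau(\beta))$. A scalar group, $F$-space, quasi-kernel $Q(V)=\{u:\forall\alpha,\beta\ \exists\gamma,\ \alpha u+\beta u=\gamma u\}$ and near-vector space (an $F$-space with free action whose quasi-kernel generates it additively) are as usual; for $u\in Q(V)\setminus\{0\}$, $\alpha+_u\beta$ is the unique $\gamma$ with $\alpha u+\beta u=\gamma u$ (here with the addition and action of $F^{\sigma,\rho}$). *)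

From Stdlib Require Import Classical.

Record nearField := NearField {
  nf_car :> Type;
  nf_add : nf_car -> nf_car -> nf_car;
  nf_zero : nf_car;
  nf_opp : nf_car -> nf_car;
  nf_mul : nf_car -> nf_car -> nf_car;
  nf_one : nf_car;
  nf_inv : nf_car -> nf_car;
  nf_addA : forall a b c, nf_add a (nf_add b c) = nf_add (nf_add a b) c;
  nf_addC : forall a b, nf_add a b = nf_add b a;
  nf_add0r : forall a, nf_add nf_zero a = a;
  nf_addNr : forall a, nf_add (nf_opp a) a = nf_zero;
  nf_mulA : forall a b c, nf_mul a (nf_mul b c) = nf_mul (nf_mul a b) c;
  nf_mul1r : forall a, nf_mul nf_one a = a;
  nf_mulr1 : forall a, nf_mul a nf_one = a;
  nf_one_neq0 : nf_one <> nf_zero;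
  nf_mul_neq0 : forall a b, a <> nf_zero -> b <> nf_zero -> nf_mul a b <> nf_zero;
  nf_inv_neq0 : forall a, a <> nf_zero -> nf_inv a <> nf_zero;
  nf_mulVf : forall a, a <> nf_zero -> nf_mul (nf_inv a) a = nf_one;
  nf_mulfV : forall a, a <> nf_zero -> nf_mul a (nf_inv a) = nf_one;
  nf_distl : forall a b c, nf_mul a (nf_add b c) = nf_add (nf_mul a b) (nf_mul a c)
}.

Arguments nf_add {_}. Arguments nf_zero {_}. Arguments nf_opp {_}.
Arguments nf_mul {_}. Arguments nf_one {_}. Arguments nf_inv {_}.

Record mult_aut (F : nearField) := MultAut {
  ma_fun :> F -> F;
  ma_inv : F -> F;
  ma_funK : forall a, ma_inv (ma_fun a) = a;
  ma_invK : forall a, ma_fun (ma_inv a) = a;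
  ma_mul : forall a b, ma_fun (nf_mul a b) = nf_mul (ma_fun a) (ma_fun b);
  ma_one : ma_fun nf_one = nf_one
}.
Arguments ma_inv {F}.

Section NearFieldFacts.
Variable F : nearField.

Lemma nf_mulr0 (a : F) : nf_mul a nf_zero = nf_zero.
Proof.
  pose proof (nf_distl F a nf_zero nf_zero) as H.
  rewrite nf_add0r in H.
  assert (H2 := f_equal (fun x => nf_add (nf_opp (nf_mul a nf_zero)) x) H).
  simpl in H2. rewrite nf_addA, nf_addNr, nf_add0r in H2. symmetry. exact H2.
Qed.

Lemma ma_zero (s : mult_aut F) : s nf_zero = nf_zero.
Proof.
  destruct (classic (s nf_zero = nf_zero)) as [H|H]; [exact H|].
  exfalso.
  assert (He : nf_mul (s nf_zero) (s nf_zero) = s nf_zero).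
  { rewrite <- ma_mul, nf_mulr0. reflexivity. }
  assert (H1 : s nf_zero = nf_one).
  { rewrite <- (nf_mulr1 F (s nf_zero)), <- (nf_mulfV F _ H), nf_mulA, He.
    reflexivity. }
  rewrite <- (ma_one F s) in H1.
  apply (f_equal (ma_inv s)) in H1. rewrite !ma_funK in H1.
  apply (nf_one_neq0 F). symmetry. exact H1.
Qed.

Lemma ma_neq0 (s : mult_aut F) (a : F) : a <> nf_zero -> s a <> nf_zero.
Proof.
  intros Ha Hs. apply Ha. rewrite <- (ma_funK F s a), Hs.
  rewrite <- (ma_zero s) at 1. apply ma_funK.
Qed.

Definition aut_comp (s r : mult_aut F) : mult_aut F.
Proof.
  refine (@MultAut F (fun a => s (r a)) (fun a => ma_inv r (ma_inv s a)) _ _ _ _).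
  - intros a. rewrite !ma_funK. reflexivity.
  - intros a. rewrite !ma_invK. reflexivity.
  - intros a b. rewrite !ma_mul. reflexivity.
  - rewrite !ma_one. reflexivity.
Defined.

Definition phi_aut (d : F) (Hd : d <> nf_zero) : mult_aut F.
Proof.
  refine (@MultAut F (fun a => nf_mul (nf_mul (nf_inv d) a) d)
                     (fun a => nf_mul (nf_mul d a) (nf_inv d)) _ _ _ _).
  - intros a. rewrite !nf_mulA, (nf_mulfV F _ Hd), nf_mul1r, <- nf_mulA,
      (nf_mulfV F _ Hd), nf_mulr1. reflexivity.
  - intros a. rewrite !nf_mulA, (nf_mulVf F _ Hd), nf_mul1r, <- nf_mulA,
      (nf_mulVf F _ Hd), nf_mulr1. reflexivity.
  - intros a b. rewrite !nf_mulA, <- (nf_mulA F _ d (nf_inv d)),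
      (nf_mulfV F _ Hd), nf_mulr1. reflexivity.
  - rewrite nf_mulr1, (nf_mulVf F _ Hd). reflexivity.
Defined.

Definition plus_aut (t : mult_aut F) (a b : F) : F :=
  ma_inv t (nf_add (t a) (t b)).

Definition oplus_d (d a b : F) : F :=
  nf_mul (nf_add (nf_mul a d) (nf_mul b d)) (nf_inv d).

Definition plus_dt (d : F) (t : mult_aut F) (a b : F) : F :=
  ma_inv t (oplus_d d (t a) (t b)).

Definition Fsr_add (s : mult_aut F) : F -> F -> F := plus_aut s.
Definition Fsr_zero (s : mult_aut F) : F := ma_inv s nf_zero.
Definition Fsr_opp (s : mult_aut F) (a : F) : F := ma_inv s (nf_opp (s a)).
Definition Fsr_act (r : mult_aut F) (a b : F) : F := nf_mul (r a) b.

End NearFieldFacts.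

Section Spaces.
Variables (S : Type) (smul : S -> S -> S) (sone szero smone : S).

Definition scalar_group : Prop :=
  (forall a b c, smul a (smul b c) = smul (smul a b) c) /\
  (forall a, smul sone a = a /\ smul a sone = a) /\
  (forall a, smul szero a = szero /\ smul a szero = szero) /\
  sone <> szero /\
  (forall a b, a <> szero -> b <> szero -> smul a b <> szero) /\
  (forall a, a <> szero -> exists b, b <> szero /\ smul a b = sone /\ smul b a = sone) /\
  (forall a, smul a a = sone <-> (a = sone \/ a = smone)).

Variables (V : Type) (vadd : V -> V -> V) (vzero : V) (vopp : V -> V)
          (act : S -> V -> V).

Definition abelian_group : Prop :=
  (forall u v w, vadd u (vadd v w) = vadd (vadd u v) w) /\
  (forall u v, vadd u v = vadd v u) /\
  (forall u, vadd vzero u = u) /\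
  (forall u, vadd (vopp u) u = vzero).

Definition F_space : Prop :=
  scalar_group /\ abelian_group /\
  (forall a b v, act (smul a b) v = act a (act b v)) /\
  (forall v, act sone v = v) /\
  (forall v, act szero v = vzero) /\
  (forall v, act smone v = vopp v) /\
  (forall a u v, act a (vadd u v) = vadd (act a u) (act a v)).

Definition quasi_kernel (u : V) : Prop :=
  forall a b, exists c, vadd (act a u) (act b u) = act c u.

Inductive add_gen (P : V -> Prop) : V -> Prop :=
| add_gen_zero : add_gen P vzero
| add_gen_in : forall u, P u -> add_gen P u
| add_gen_sub : forall u v, add_gen P u -> add_gen P v -> add_gen P (vadd u (vopp v)).

Definition free_action : Prop :=
  forall a b v, act a v = act b v -> a = b \/ v = vzero.

Definition near_vector_space : Prop :=
  F_space /\ free_action /\ (forall v, add_gen quasi_kernel v).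

(* c = a +_u b, i.e. a u + b u = c u (c is unique when the action is free) *)
Definition is_qk_add (u : V) (a b c : S) : Prop :=
  vadd (act a u) (act b u) = act c u.

End Spaces.

Arguments scalar_group {S}. Arguments abelian_group {V}.
Arguments F_space {S} _ _ _ _ {V}. Arguments quasi_kernel {S V}.
Arguments add_gen {V}. Arguments free_action {S V}.
Arguments near_vector_space {S} _ _ _ _ {V}. Arguments is_qk_add {S V}.
Arguments aut_comp {F}. Arguments phi_aut {F d}. Arguments plus_aut {F}.
Arguments oplus_d {F}. Arguments plus_dt {F}. Arguments Fsr_add {F}.
Arguments Fsr_zero {F}. Arguments Fsr_opp {F}. Arguments Fsr_act {F}.
Arguments ma_neq0 {F} s {a}.

From Stdlib Require Import Classical.

(* Everything in F^{sigma,rho} is the near-field structure of F transported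
   along sigma.  Since sigma is multiplicative, applying sigma to
   [rho(a) u +_sigma rho(b) u = rho(c) u] gives
   [sigma(rho a) sigma(u) + sigma(rho b) sigma(u) = sigma(rho c) sigma(u)],
   which is solved by right division by sigma(u) <> 0: that is precisely
   c = a +_{sigma(u), sigma o rho} b.  So every vector lies in the
   quasi-kernel, the action is free because F has no zero divisors, and the
   remaining equalities of additions are conjugation identities. *)

Section NearFieldTheory.
Variable F : nearField.
Local Notation "a + b" := (@nf_add F a b).
Local Notation "a * b" := (@nf_mul F a b).
Local Notation "0" := (@nf_zero F).
Local Notation "1" := (@nf_one F).
Local Notation "- a" := (@nf_opp F a).

Lemma nf_addr0 (a : F) : a + 0 = a.
Proof. rewrite nf_addC, nf_add0r. reflexivity. Qed.

Lemma nf_addrN (a : F) : a + - a = 0.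
Proof. rewrite nf_addC, nf_addNr. reflexivity. Qed.

Lemma nf_addr_eq0 (a b : F) : a + b = 0 -> a = - b.
Proof.
  intro H. rewrite <- (nf_addr0 a), <- (nf_addrN b), nf_addA, H, nf_add0r.
  reflexivity.
Qed.

Lemma nf_oppK (a : F) : - - a = a.
Proof. symmetry. apply nf_addr_eq0, nf_addrN. Qed.

Lemma nf_oppr0 : - 0 = 0.
Proof. symmetry. apply nf_addr_eq0, nf_add0r. Qed.

Lemma nf_mulIr (a b c : F) : c <> 0 -> a * c = b * c -> a = b.
Proof.
  intros Hc H.
  rewrite <- (nf_mulr1 F a), <- (nf_mulr1 F b), <- (nf_mulfV F _ Hc), !nf_mulA, H.
  reflexivity.
Qed.

Lemma nf_mul0r (a : F) : 0 * a = 0.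
Proof.
  destruct (classic (a = 0)) as [-> | Ha]; [apply nf_mulr0 |].
  apply NNPP. intro H0.
  apply (nf_mul_neq0 F _ _ H0 (nf_inv_neq0 F _ Ha)).
  rewrite <- nf_mulA, (nf_mulfV F _ Ha). apply nf_mulr1.
Qed.

Lemma nf_mulrN1 (a : F) : a * - (1) = - a.
Proof.
  apply nf_addr_eq0. rewrite <- (nf_mulr1 F a) at 2.
  rewrite <- nf_distl, nf_addNr. apply nf_mulr0.
Qed.

Lemma nf_sqrN1 : - (1) * - (1) = 1.
Proof. rewrite nf_mulrN1. apply nf_oppK. Qed.

Lemma nf_sqr_eq1 (a : F) : a * a = 1 -> a = 1 \/ a = - (1).
Proof.
  intro H. destruct (classic (a + 1 = 0)) as [H0 | H0].
  - right. apply nf_addr_eq0, H0.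
  - left. apply (nf_mulIr a 1 (a + 1) H0).
    rewrite nf_distl, H, nf_mulr1, nf_mul1r, nf_addC. reflexivity.
Qed.

(* The conjugate a^-1 (-1) a squares to 1, hence is 1 or -1; if it were 1,
   then -1 = 1 as well. *)
Lemma nf_mulN1r (a : F) : - (1) * a = - a.
Proof.
  destruct (classic (a = 0)) as [-> | Ha].
  { rewrite nf_mulr0, nf_oppr0. reflexivity. }
  set (c := nf_inv a * - (1) * a).
  assert (Hc2 : c * c = 1).
  { unfold c. rewrite <- !nf_mulA, (nf_mulA F a (nf_inv a)), (nf_mulfV F _ Ha),
      nf_mul1r, (nf_mulA F (- (1)) (- (1))), nf_sqrN1, nf_mul1r.
    apply nf_mulVf, Ha. }
  assert (Hac : - (1) * a = a * c).
  { unfold c. rewrite !nf_mulA, (nf_mulfV F _ Ha), nf_mul1r. reflexivity. }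
  rewrite Hac. destruct (nf_sqr_eq1 c Hc2) as [E | E]; rewrite E.
  - assert (HN1 : - (1) = 1).
    { apply (nf_mulIr _ _ a Ha). rewrite Hac, E, nf_mulr1, nf_mul1r. reflexivity. }
    rewrite nf_mulr1, <- nf_mulrN1, HN1, nf_mulr1. reflexivity.
  - apply nf_mulrN1.
Qed.

Lemma nf_inv1 : nf_inv 1 = 1.
Proof. rewrite <- (nf_mul1r F (nf_inv 1)). apply nf_mulfV, nf_one_neq0. Qed.

Lemma scalar_group_nf : scalar_group (@nf_mul F) 1 0 (- (1)).
Proof.
  repeat split.
  - apply nf_mulA.
  - apply nf_mul1r.
  - apply nf_mulr1.
  - apply nf_mul0r.
  - apply nf_mulr0.
  - apply nf_one_neq0.
  - apply nf_mul_neq0.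
  - intros a Ha. exists (nf_inv a).
    split; [apply nf_inv_neq0, Ha | split; [apply nf_mulfV, Ha | apply nf_mulVf, Ha]].
  - apply nf_sqr_eq1.
  - intros [-> | ->]; [apply nf_mul1r | apply nf_sqrN1].
Qed.

Lemma ma_inj (s : mult_aut F) (a b : F) : s a = s b -> a = b.
Proof. intro H. rewrite <- (ma_funK F s a), H, ma_funK. reflexivity. Qed.

Lemma ma_inv0 (s : mult_aut F) : ma_inv s 0 = 0.
Proof. apply (ma_inj s). rewrite ma_invK, ma_zero. reflexivity. Qed.

Lemma ma_N1 (s : mult_aut F) : s (- (1)) = - (1).
Proof.
  assert (H : s (- (1)) * s (- (1)) = 1) by (rewrite <- ma_mul, nf_sqrN1; apply ma_one).
  destruct (nf_sqr_eq1 _ H) as [E | E]; [| exact E].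
  rewrite E. symmetry. apply (ma_inj s). rewrite E, ma_one. reflexivity.
Qed.

Lemma ma_opp (s : mult_aut F) (a : F) : s (- a) = - s a.
Proof. rewrite <- nf_mulN1r, ma_mul, ma_N1, nf_mulN1r. reflexivity. Qed.

Lemma ma_nf_inv (s : mult_aut F) (a : F) : a <> 0 -> s (nf_inv a) = nf_inv (s a).
Proof.
  intro Ha. apply (nf_mulIr _ _ (s a) (ma_neq0 s Ha)).
  rewrite <- ma_mul, (nf_mulVf F _ Ha), (nf_mulVf F _ (ma_neq0 s Ha)). apply ma_one.
Qed.

Lemma ma_phi_aut (s : mult_aut F) (g : F) (Hg : g <> 0) (Hsg : s g <> 0) (a : F) :
  s (phi_aut Hg a) = phi_aut Hsg (s a).
Proof. simpl. rewrite !ma_mul, (ma_nf_inv s g Hg). reflexivity. Qed.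

Lemma plus_aut_ext (s t : mult_aut F) :
  (forall a, s a = t a) -> forall a b, plus_aut s a b = plus_aut t a b.
Proof.
  intros E a b. unfold plus_aut. rewrite !E.
  apply (ma_inj s). rewrite ma_invK, E, ma_invK. reflexivity.
Qed.

Lemma plus_dt_phi (d : F) (Hd : d <> 0) (t : mult_aut F) (a b : F) :
  plus_dt d t a b = plus_aut (aut_comp (phi_aut Hd) t) a b.
Proof.
  unfold plus_dt, oplus_d, plus_aut. simpl.
  rewrite nf_distl, !nf_mulA, (nf_mulfV F _ Hd), !nf_mul1r. reflexivity.
Qed.

Lemma plus_dt1 (t : mult_aut F) (a b : F) : plus_dt 1 t a b = plus_aut t a b.
Proof. unfold plus_dt, oplus_d, plus_aut. rewrite !nf_mulr1, nf_inv1, nf_mulr1. reflexivity. Qed.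

Section TwistedSpace.
Variables sigma rho : mult_aut F.

Lemma Fsr_zeroE : Fsr_zero sigma = 0.
Proof. apply ma_inv0. Qed.

Lemma abelian_group_Fsr : abelian_group (Fsr_add sigma) (Fsr_zero sigma) (Fsr_opp sigma).
Proof.
  unfold Fsr_add, plus_aut, Fsr_zero, Fsr_opp.
  repeat split; intros; rewrite ?ma_invK.
  - rewrite nf_addA. reflexivity.
  - rewrite nf_addC. reflexivity.
  - rewrite nf_add0r, ma_funK. reflexivity.
  - rewrite nf_addNr. reflexivity.
Qed.

Lemma F_space_Fsr :
  F_space (@nf_mul F) 1 0 (- (1))
    (Fsr_add sigma) (Fsr_zero sigma) (Fsr_opp sigma) (Fsr_act rho).
Proof.
  unfold Fsr_act.
  split; [exact scalar_group_nf | split; [exact abelian_group_Fsr |]].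
  repeat split.
  - intros a b v. rewrite ma_mul, nf_mulA. reflexivity.
  - intro v. rewrite ma_one, nf_mul1r. reflexivity.
  - intro v. rewrite ma_zero, nf_mul0r, Fsr_zeroE. reflexivity.
  - intro v. unfold Fsr_opp.
    rewrite ma_N1, nf_mulN1r, <- ma_opp, ma_funK. reflexivity.
  - intros a u v. unfold Fsr_add, plus_aut. apply (ma_inj sigma).
    rewrite ma_invK, !ma_mul, ma_invK, nf_distl. reflexivity.
Qed.

Lemma free_action_Fsr : free_action (Fsr_zero sigma) (Fsr_act rho).
Proof.
  intros a b v H. unfold Fsr_act in H. rewrite Fsr_zeroE.
  destruct (classic (v = 0)) as [Hv | Hv]; [right; exact Hv | left].
  apply (ma_inj rho), (nf_mulIr _ _ _ Hv H).
Qed.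

Lemma is_qk_add_Fsr (g : F) (Hg : g <> 0) (a b : F) :
  is_qk_add (Fsr_add sigma) (Fsr_act rho) g a b
    (plus_dt (sigma g) (aut_comp sigma rho) a b).
Proof.
  unfold is_qk_add, Fsr_add, plus_aut, Fsr_act, plus_dt, oplus_d. simpl.
  rewrite ma_invK. apply (ma_inj sigma).
  rewrite !ma_mul, !ma_invK, <- nf_mulA, (nf_mulVf F _ (ma_neq0 sigma Hg)), nf_mulr1.
  reflexivity.
Qed.

Lemma quasi_kernel_Fsr (u : F) : quasi_kernel (Fsr_add sigma) (Fsr_act rho) u.
Proof.
  intros a b. destruct (classic (u = 0)) as [-> | Hu].
  - exists 1. unfold Fsr_add, plus_aut, Fsr_act.
    rewrite !nf_mulr0, ma_zero, nf_add0r, ma_inv0. reflexivity.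
  - exists (plus_dt (sigma u) (aut_comp sigma rho) a b). apply is_qk_add_Fsr, Hu.
Qed.

Lemma near_vector_space_Fsr :
  near_vector_space (@nf_mul F) 1 0 (- (1))
    (Fsr_add sigma) (Fsr_zero sigma) (Fsr_opp sigma) (Fsr_act rho).
Proof.
  split; [exact F_space_Fsr | split; [exact free_action_Fsr |]].
  intro v. apply add_gen_in, quasi_kernel_Fsr.
Qed.

End TwistedSpace.
End NearFieldTheory.

Theorem mainTheorem5 (F : nearField) (sigma rho : mult_aut F) :
  (* F^{sigma,rho} is a near-vector space over the scalar group (F,.,1,0,-1) *)
  near_vector_space (@nf_mul F) nf_one nf_zero (nf_opp nf_one)
    (Fsr_add sigma) (Fsr_zero sigma) (Fsr_opp sigma) (Fsr_act rho)
  (* Q(F^{sigma,rho}) = F *)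
  /\ (forall u : F, quasi_kernel (Fsr_add sigma) (Fsr_act rho) u)
  (* +_g = +_{sigma(g), sigma o rho} = +_{phi_{sigma g} o sigma o rho}
         = +_{sigma o phi_g o rho} *)
  /\ (forall (g : F) (Hg : g <> nf_zero),
        (forall a b, is_qk_add (Fsr_add sigma) (Fsr_act rho) g a b
                       (plus_dt (sigma g) (aut_comp sigma rho) a b))
        /\ (forall a b, plus_dt (sigma g) (aut_comp sigma rho) a b
                        = plus_aut (aut_comp (phi_aut (ma_neq0 sigma Hg))
                                             (aut_comp sigma rho)) a b)
        /\ (forall a b, plus_aut (aut_comp (phi_aut (ma_neq0 sigma Hg))
                                           (aut_comp sigma rho)) a b
                        = plus_aut (aut_comp sigma (aut_comp (phi_aut Hg) rho)) a b))
  (* in particular +_1 = +_{sigma o rho} *)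
  /\ (forall a b, is_qk_add (Fsr_add sigma) (Fsr_act rho) nf_one a b
                    (plus_aut (aut_comp sigma rho) a b)).
Proof.
  split; [exact (near_vector_space_Fsr F sigma rho) |].
  split; [exact (quasi_kernel_Fsr F sigma rho) |].
  split.
  - intros g Hg. split; [| split]; intros a b.
    + apply is_qk_add_Fsr, Hg.
    + apply plus_dt_phi.
    + apply plus_aut_ext. intro x. symmetry. apply (ma_phi_aut F sigma g Hg).
  - intros a b.
    pose proof (is_qk_add_Fsr F sigma rho _ (nf_one_neq0 F) a b) as H1.
    rewrite ma_one, plus_dt1 in H1. exact H1.
Qed.
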